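(* $$\sum_{i,j,k\ge0}\frac{q^{i^2+j^2+k^2}}{(q)_{i+j-k}(q)_{i+k-j}(q)_{j+k-i}}=\frac12(-\sqrt q;q)_\infty\sum_{i\ge0}\frac{(-\sqrt q;q)_i\,q^{\frac32 i^2}}{(q)_{2i}}+\frac12(\sqrt q;q)_\infty\sum_{i\ge0}\frac{(\sqrt q;q)_i\,q^{\frac32 i^2}(-1)^i}{(q)_{2i}}.$$
   Context: $0<q<1$, $\sqrt q=q^{1/2}$. $(a;q)_n=\prod_{j=0}^{n-1}(1-aq^j)$ for $n\ge 0$, $(a;q)_\infty=\lim_{n\to\infty}(a;q)_n$, $(q)_n=(q;q)_n$, and $1/(q)_n:=0$ for $n<0$. *)

From Stdlib Require Import Reals ZArith.
Open Scope R_scope.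

Fixpoint qpoch (a q : R) (n : nat) : R :=
  match n with
  | O => 1
  | S m => qpoch a q m * (1 - a * q ^ m)
  end.

(* 1/(q)_n for an integer n, with 1/(q)_n := 0 for n < 0 *)
Definition inv_qfac (q : R) (n : Z) : R :=
  if (n <? 0)%Z then 0 else / qpoch q q (Z.to_nat n).

Definition lhs_term (q : R) (i j k : nat) : R :=
  q ^ (i * i + j * j + k * k)
  * inv_qfac q (Z.of_nat i + Z.of_nat j - Z.of_nat k)
  * inv_qfac q (Z.of_nat i + Z.of_nat k - Z.of_nat j)
  * inv_qfac q (Z.of_nat j + Z.of_nat k - Z.of_nat i).

(* partial sum over the cube 0 <= i,j,k <= N (terms are nonnegative) *)
Definition lhs_partial (q : R) (N : nat) : R :=
  sum_f_R0 (fun i => sum_f_R0 (fun j => sum_f_R0 (fun k => lhs_term q i j k) N) N) N.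

From Stdlib Require Import Reals ZArith Lia Lra.
Open Scope R_scope.

(** Fix [i] and put [s = i + k - j], which runs over [0..2i] independently of [j]. Writing
    [s = 2h + p] ([p = 0, 1]) and [j = i - h + m], the summand factors as [s_coeff i s] times
    [x^(c^2 + 2ic) / (q)_c] with [c = 2m + p]. Hence the [j]-sum of a slice is the even or odd
    part of Euler's series [sum_c z^c q^(c(c-1)/2) / (q)_c = (-z;q)_oo] at [z = x q^i], i.e. half
    the sum or difference of [(-x;q)_oo / (-x;q)_i] and [(x;q)_oo / (x;q)_i]. The remaining
    finite [s]-sums are evaluated by the q-binomial theorem ([finite_identity] at [y = +-x]).
    Finally, as all terms are nonnegative, Tannery's theorem turns the cubical partial sums of
    the statement into the iterated sum over [k], then [j], then [i]. *)

Lemma Un_cv_eventually (u v : nat -> R) (l : R) (N0 : nat) :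
  (forall n, (N0 <= n)%nat -> u n = v n) -> Un_cv v l -> Un_cv u l.
Proof.
  intros Huv Cv e He. destruct (Cv e He) as [N HN]. exists (max N N0). intros n Hn.
  rewrite Huv by lia. apply HN. lia.
Qed.

Lemma Un_cv_const (c : R) : Un_cv (fun _ => c) c.
Proof. intros e He. exists O. intros n _. unfold Rdist. rewrite Rminus_diag, Rabs_R0. exact He. Qed.

Lemma Un_cv_scal (c : R) (u : nat -> R) (l : R) : Un_cv u l -> Un_cv (fun n => c * u n) (c * l).
Proof. intro Cu. apply (CV_mult (fun _ => c)); [apply Un_cv_const | exact Cu]. Qed.

Lemma Un_cv_pow0 (r : R) : 0 <= r < 1 -> Un_cv (fun n => r ^ n) 0.
Proof.
  intros Hr e He. destruct (pow_lt_1_zero r ltac:(rewrite Rabs_right; lra) e He) as [N HN].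
  exists N. intros n Hn. unfold Rdist. rewrite Rminus_0_r. auto.
Qed.

Lemma Un_cv_subseq (u : nat -> R) (phi : nat -> nat) (l : R) :
  (forall n, (n <= phi n)%nat) -> Un_cv u l -> Un_cv (fun n => u (phi n)) l.
Proof.
  intros Hphi Cu e He. destruct (Cu e He) as [N HN]. exists N. intros n Hn. apply HN.
  specialize (Hphi n). lia.
Qed.

Lemma sum_f_R0_zero (u : nat -> R) (N : nat) :
  (forall n, (n <= N)%nat -> u n = 0) -> sum_f_R0 u N = 0.
Proof.
  induction N as [|N IH]; intros Hu; simpl.
  - apply Hu; lia.
  - rewrite IH by (intros; apply Hu; lia). rewrite (Hu (S N)) by lia. ring.
Qed.

Lemma sum_drop_zeros (u : nat -> R) (d m : nat) :
  (forall k, (k < d)%nat -> u k = 0) -> sum_f_R0 u (d + m) = sum_f_R0 (fun k => u (d + k)%nat) m.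
Proof.
  intros Hu. induction m as [|m IH].
  - rewrite Nat.add_0_r. simpl sum_f_R0 at 2. rewrite Nat.add_0_r. destruct d as [|d]; [reflexivity|].
    rewrite tech5, sum_f_R0_zero by (intros; apply Hu; lia). ring.
  - replace (d + S m)%nat with (S (d + m)) by lia. rewrite !tech5, IH.
    replace (d + S m)%nat with (S (d + m)) by lia. reflexivity.
Qed.

Lemma series_drop_zeros (u : nat -> R) (d : nat) (l : R) :
  (forall k, (k < d)%nat -> u k = 0) ->
  Un_cv (sum_f_R0 (fun k => u (d + k)%nat)) l -> Un_cv (sum_f_R0 u) l.
Proof.
  intros Hu C. apply (CV_shift _ d).
  apply (Un_cv_ext (sum_f_R0 (fun k => u (d + k)%nat))); [|exact C].
  intro n. rewrite Nat.add_comm, sum_drop_zeros by exact Hu. reflexivity.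
Qed.

Lemma sum_trailing_zeros (u : nat -> R) (m N : nat) :
  (m <= N)%nat -> (forall k, (m < k)%nat -> u k = 0) -> sum_f_R0 u N = sum_f_R0 u m.
Proof.
  intros Hm Hu. induction N as [|N IH].
  - replace m with O by lia. reflexivity.
  - destruct (Nat.eq_dec m (S N)) as [->|Hne]; [reflexivity|].
    rewrite tech5, IH, Hu by lia. ring.
Qed.

Lemma finite_sum_of_series (F : nat -> nat -> R) (D : nat -> R) (m : nat) :
  (forall s, (s <= m)%nat -> Un_cv (sum_f_R0 (fun j => F j s)) (D s)) ->
  Un_cv (sum_f_R0 (fun j => sum_f_R0 (F j) m)) (sum_f_R0 D m).
Proof.
  induction m as [|m IH]; intros HF; simpl.
  - apply HF. lia.
  - apply (Un_cv_ext (fun n => sum_f_R0 (fun j => sum_f_R0 (F j) m) n + sum_f_R0 (fun j => F j (S m)) n)).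
    + intro n. rewrite <- plus_sum. reflexivity.
    + apply CV_plus; [apply IH; intros; apply HF; lia | apply HF; lia].
Qed.

Lemma finite_sum_of_limits (f : nat -> nat -> R) (g : nat -> R) (K : nat) :
  (forall k, Un_cv (fun N => f N k) (g k)) -> Un_cv (fun N => sum_f_R0 (f N) K) (sum_f_R0 g K).
Proof. intros Hf. induction K as [|K IH]; simpl; [apply Hf | apply CV_plus; auto]. Qed.

Lemma series_cv_comparison (g M : nat -> R) (SM : R) :
  (forall k, Rabs (g k) <= M k) -> Un_cv (sum_f_R0 M) SM -> exists S, Un_cv (sum_f_R0 g) S.
Proof.
  intros Hd CM.
  assert (C2 : {l | Un_cv (sum_f_R0 (fun k => 2 * M k)) l}).
  { exists (2 * SM). apply (Un_cv_ext (fun N => 2 * sum_f_R0 M N)).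
    - intro n. rewrite scal_sum. apply sum_eq. intros; ring.
    - apply Un_cv_scal. exact CM. }
  destruct (Rseries_CV_comp (fun k => Rabs (g k) + g k) (fun k => 2 * M k)) as [l1 H1];
    [|exact C2|].
  { intro n. specialize (Hd n). pose proof (Rle_abs (g n)). pose proof (Rle_abs (- g n)).
    rewrite Rabs_Ropp in *. lra. }
  destruct (Rseries_CV_comp (fun k => Rabs (g k)) (fun k => 2 * M k)) as [l2 H2]; [|exact C2|].
  { intro n. specialize (Hd n). pose proof (Rabs_pos (g n)). lra. }
  exists (l1 - l2).
  apply (Un_cv_ext (fun N => sum_f_R0 (fun k => Rabs (g k) + g k) N - sum_f_R0 (fun k => Rabs (g k)) N)).
  - intro n. rewrite <- minus_sum. apply sum_eq. intros; ring.
  - apply CV_minus; assumption.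
Qed.

Lemma partial_sum_diff_bound (g M : nat -> R) (K n : nat) :
  (forall k, Rabs (g k) <= M k) ->
  Rabs (sum_f_R0 g (K + n) - sum_f_R0 g K) <= sum_f_R0 M (K + n) - sum_f_R0 M K.
Proof.
  intros Hd. induction n as [|n IH].
  - rewrite Nat.add_0_r, !Rminus_diag, Rabs_R0. lra.
  - replace (K + S n)%nat with (S (K + n)) by lia. rewrite !tech5.
    replace (sum_f_R0 g (K + n) + g (S (K + n)) - sum_f_R0 g K) with
      ((sum_f_R0 g (K + n) - sum_f_R0 g K) + g (S (K + n))) by ring.
    eapply Rle_trans; [apply Rabs_triang|]. specialize (Hd (S (K + n))). lra.
Qed.

(** This is the dominated-convergence step that justifies every exchange of limits below. *)
Lemma tannery (f : nat -> nat -> R) (g M : nat -> R) (SM : R) :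
  (forall N k, Rabs (f N k) <= M k) -> Un_cv (sum_f_R0 M) SM ->
  (forall k, Un_cv (fun N => f N k) (g k)) ->
  exists Sg, Un_cv (sum_f_R0 g) Sg /\ Un_cv (fun N => sum_f_R0 (f N) N) Sg.
Proof.
  intros Hd CM Cf.
  assert (Hg : forall k, Rabs (g k) <= M k).
  { intro k. apply (@Rle_cv_lim (fun N => Rabs (f N k)) (fun _ => M k)).
    - intro; apply Hd.
    - apply cv_cvabs, Cf.
    - apply Un_cv_const. }
  assert (Mpos : forall k, 0 <= M k) by (intro k; eapply Rle_trans; [apply Rabs_pos | apply (Hd O)]).
  destruct (series_cv_comparison g M SM Hg CM) as [Sg Cg].
  exists Sg. split; [exact Cg|].
  intros e He.
  destruct (CM (e / 3) ltac:(lra)) as [K HK]. specialize (HK K (le_n _)). unfold Rdist in HK.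
  assert (tailM : SM - sum_f_R0 M K < e / 3).
  { rewrite <- Rabs_Ropp in HK. pose proof (Rle_abs (- (sum_f_R0 M K - SM))). lra. }
  destruct (finite_sum_of_limits f g K Cf (e / 3) ltac:(lra)) as [N1 HN1].
  exists (max N1 K). intros N HN. unfold Rdist.
  specialize (HN1 N ltac:(lia)). unfold Rdist in HN1.
  assert (tailg : Rabs (Sg - sum_f_R0 g K) <= SM - sum_f_R0 M K)
    by exact (sum_maj1 (fun k _ => g k) M 0 Sg SM K Cg CM Hg).
  pose proof (partial_sum_diff_bound (f N) M K (N - K) (Hd N)) as tailf.
  replace (K + (N - K))%nat with N in tailf by lia.
  pose proof (sum_incr M N SM CM Mpos).
  replace (sum_f_R0 (f N) N - Sg) with
    ((sum_f_R0 (f N) N - sum_f_R0 (f N) K) + (sum_f_R0 (f N) K - sum_f_R0 g K)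
     - (Sg - sum_f_R0 g K)) by ring.
  eapply Rle_lt_trans; [apply Rabs_triang|]. rewrite Rabs_Ropp.
  eapply Rle_lt_trans; [apply Rplus_le_compat_r, Rabs_triang|]. lra.
Qed.

Lemma tannery_monotone (f : nat -> nat -> R) (g : nat -> R) (L : R) :
  (forall N k, 0 <= f N k <= g k) -> (forall k, Un_cv (fun N => f N k) (g k)) ->
  Un_cv (sum_f_R0 g) L -> Un_cv (fun N => sum_f_R0 (f N) N) L.
Proof.
  intros Hf Cf Cg.
  destruct (tannery f g g L) as [Sg [C1 C2]]; auto.
  - intros N k. rewrite Rabs_pos_eq; apply Hf.
  - rewrite (UL_sequence _ _ _ Cg C1). exact C2.
Qed.

Lemma cube_sum_iterated (t : nat -> nat -> nat -> R) (H : nat -> nat -> R) (G : nat -> R) (L : R) :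
  (forall i j k, 0 <= t i j k) ->
  (forall i j, Un_cv (sum_f_R0 (t i j)) (H i j)) ->
  (forall i, Un_cv (sum_f_R0 (H i)) (G i)) ->
  Un_cv (sum_f_R0 G) L ->
  Un_cv (fun N => sum_f_R0 (fun i => sum_f_R0 (fun j => sum_f_R0 (t i j) N) N) N) L.
Proof.
  intros Ht CH CG CL.
  assert (Hpos : forall i j, 0 <= H i j).
  { intros i j. eapply Rle_trans; [apply (cond_pos_sum (t i j) O (Ht i j)) | apply sum_incr; auto]. }
  assert (square : forall i, Un_cv (fun N => sum_f_R0 (fun j => sum_f_R0 (t i j) N) N) (G i)).
  { intro i. apply (tannery_monotone _ (H i)); [|apply CH|apply CG].
    intros N j. split; [apply cond_pos_sum, Ht | apply sum_incr; auto]. }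
  apply (tannery_monotone _ G); [|exact square|exact CL].
  intros N i. split.
  - apply cond_pos_sum. intro j. apply cond_pos_sum, Ht.
  - apply Rle_trans with (sum_f_R0 (H i) N).
    + apply sum_growing. intro j. apply sum_incr; auto.
    + apply sum_incr; auto.
Qed.

Lemma series_lin_comb (u v : nat -> R) (a b A B : R) :
  Un_cv (sum_f_R0 u) A -> Un_cv (sum_f_R0 v) B ->
  Un_cv (sum_f_R0 (fun i => a * u i + b * v i)) (a * A + b * B).
Proof.
  intros Cu Cv. apply (Un_cv_ext (fun N => a * sum_f_R0 u N + b * sum_f_R0 v N)).
  - intro N. rewrite plus_sum, !scal_sum. f_equal; apply sum_eq; intros; ring.
  - apply CV_plus; apply Un_cv_scal; assumption.
Qed.

Lemma gaussian_series_cv (C y : R) (a : nat -> R) : 0 < C -> 0 < y < 1 ->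
  (forall i, Rabs (a i) <= C ^ i * y ^ (i * i)) -> exists S, Un_cv (sum_f_R0 a) S.
Proof.
  intros HC Hy Ha.
  set (M := fun i => C ^ i * y ^ (i * i)).
  assert (Mneq : forall i, M i <> 0).
  { intro i. apply Rmult_integral_contrapositive_currified; apply pow_nonzero; lra. }
  destruct (Alembert_C2 M Mneq) as [SM CM].
  - apply (Un_cv_ext (fun n => C * y * (y ^ 2) ^ n)).
    + intro n. unfold M. replace (S n * S n)%nat with (n * n + (1 + 2 * n))%nat by nia.
      rewrite pow_add, pow_add, (pow_mult y 2 n). simpl (C ^ S n).
      replace (C * C ^ n * (y ^ (n * n) * (y ^ 1 * (y ^ 2) ^ n)) / (C ^ n * y ^ (n * n)))
        with (C * y * (y ^ 2) ^ n) by (field; split; apply pow_nonzero; lra).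
      rewrite Rabs_pos_eq; [reflexivity|].
      apply Rmult_le_pos; [apply Rmult_le_pos|apply pow_le, pow_le]; lra.
    + rewrite <- (Rmult_0_r (C * y)). apply Un_cv_scal, Un_cv_pow0.
      split; [apply pow_le; lra | apply pow_lt_1_compat; lra || lia].
  - exact (series_cv_comparison a M SM Ha CM).
Qed.

Lemma pow_m1_even (n : nat) : (-1) ^ (2 * n) = 1.
Proof. rewrite pow_mult. replace ((-1) ^ 2) with 1 by ring. apply pow1. Qed.

Lemma pow_m1_odd (n : nat) : (-1) ^ (2 * n + 1) = -1.
Proof. rewrite pow_add, pow_m1_even. ring. Qed.

Lemma pow_m1_square (s : nat) : (-1) ^ (s * s) = (-1) ^ s.
Proof.
  induction s as [|s IH]; [reflexivity|].
  replace (S s * S s)%nat with (s * s + 2 * s + 1)%nat by nia.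
  rewrite !pow_add, IH, pow_m1_even. simpl. ring.
Qed.

Lemma sum_parity_part (a : nat -> R) (p M : nat) : (p <= 1)%nat ->
  sum_f_R0 (fun m => a (2 * m + p)%nat) M =
  (sum_f_R0 a (2 * M + 1) + (-1) ^ p * sum_f_R0 (fun c => (-1) ^ c * a c) (2 * M + 1)) / 2.
Proof.
  intros Hp. induction M as [|M IH].
  - destruct p as [|[|]]; [simpl; field..|lia].
  - rewrite tech5, IH. replace (2 * S M + 1)%nat with (S (S (2 * M + 1))) by lia.
    rewrite !tech5. replace (S (S (2 * M + 1))) with (2 * S M + 1)%nat by lia.
    replace (S (2 * M + 1)) with (2 * S M)%nat by lia.
    rewrite pow_m1_even, pow_m1_odd.
    destruct p as [|[|]]; [rewrite Nat.add_0_r; simpl; field | simpl; field | lia].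
Qed.

Lemma series_parity_part (a : nat -> R) (A B : R) (p : nat) : (p <= 1)%nat ->
  Un_cv (sum_f_R0 a) A -> Un_cv (sum_f_R0 (fun c => (-1) ^ c * a c)) B ->
  Un_cv (sum_f_R0 (fun m => a (2 * m + p)%nat)) ((A + (-1) ^ p * B) / 2).
Proof.
  intros Hp CA CB.
  apply (Un_cv_ext (fun M => (sum_f_R0 a (2 * M + 1)
           + (-1) ^ p * sum_f_R0 (fun c => (-1) ^ c * a c) (2 * M + 1)) * / 2)).
  { intro M. rewrite sum_parity_part by exact Hp. reflexivity. }
  apply (CV_mult _ (fun _ => / 2)); [|apply Un_cv_const].
  apply CV_plus; [|apply Un_cv_scal];
    apply (Un_cv_subseq _ (fun M => 2 * M + 1)%nat); auto; intros; lia.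
Qed.

Lemma qpoch_S (a q : R) (n : nat) : qpoch a q (S n) = qpoch a q n * (1 - a * q ^ n).
Proof. reflexivity. Qed.

Lemma qpoch_split (a q : R) (m n : nat) : qpoch a q (m + n) = qpoch a q m * qpoch (a * q ^ m) q n.
Proof.
  induction n as [|n IH]; [rewrite Nat.add_0_r; simpl; ring|].
  replace (m + S n)%nat with (S (m + n)) by lia. rewrite !qpoch_S, IH, pow_add. ring.
Qed.

Lemma qpoch_front (a q : R) (n : nat) : qpoch a q (S n) = (1 - a) * qpoch (a * q) q n.
Proof. induction n as [|n IH]; [simpl; ring|]. rewrite qpoch_S, IH, qpoch_S. simpl. ring. Qed.

Lemma pow_unit_interval (r : R) (n : nat) : 0 <= r <= 1 -> 0 <= r ^ n <= 1.
Proof.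
  intros Hr. induction n as [|n IH]; simpl; [lra|].
  split; [apply Rmult_le_pos; lra|]. replace 1 with (1 * 1) by ring. apply Rmult_le_compat; lra.
Qed.

Lemma qpoch_pos (a q : R) (n : nat) : 0 <= q <= 1 -> a < 1 -> 0 < qpoch a q n.
Proof.
  intros Hq Ha. induction n as [|n IH]; simpl; [lra|]. apply Rmult_lt_0_compat; [exact IH|].
  destruct (pow_unit_interval q n Hq). destruct (Rle_or_lt a 0).
  - assert (0 <= - a * q ^ n) by (apply Rmult_le_pos; lra). lra.
  - assert (a * q ^ n <= a * 1) by (apply Rmult_le_compat_l; lra). lra.
Qed.

Lemma qpoch_unit_interval (a q : R) (n : nat) : 0 <= q <= 1 -> 0 <= a <= 1 -> 0 <= qpoch a q n <= 1.
Proof.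
  intros Hq Ha. induction n as [|n IH]; simpl; [lra|].
  destruct (pow_unit_interval q n Hq).
  assert (0 <= a * q ^ n) by (apply Rmult_le_pos; lra).
  assert (a * q ^ n <= 1 * 1) by (apply Rmult_le_compat; lra).
  split; [apply Rmult_le_pos; lra|].
  replace 1 with (1 * 1) by ring. apply Rmult_le_compat; lra.
Qed.

Lemma qpoch_le_pow2 (a q : R) (n : nat) : 0 <= q <= 1 -> -1 <= a <= 0 -> qpoch a q n <= 2 ^ n.
Proof.
  intros Hq Ha. induction n as [|n IH]; simpl; [lra|].
  destruct (pow_unit_interval q n Hq).
  assert (- a * q ^ n <= 1 * 1) by (apply Rmult_le_compat; lra).
  assert (0 <= - a * q ^ n) by (apply Rmult_le_pos; lra).
  rewrite Rmult_comm. apply Rmult_le_compat; [lra | left; apply qpoch_pos; lra | lra | exact IH].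
Qed.

(** [(q;q)_n >= (1-q)^n], so [1/(q;q)_n] grows at most geometrically. *)
Lemma qfac_lower (q : R) (n : nat) : 0 <= q < 1 -> (1 - q) ^ n <= qpoch q q n.
Proof.
  intros Hq. induction n as [|n IH]; simpl; [lra|].
  destruct (pow_unit_interval q n ltac:(lra)).
  assert (q * q ^ n <= q * 1) by (apply Rmult_le_compat_l; lra).
  rewrite Rmult_comm. apply Rmult_le_compat; [apply pow_le; lra | lra | exact IH | lra].
Qed.

(** [gauss_weight z q c = z^c q^(c(c-1)/2)], the coefficient in the q-binomial theorem. *)
Fixpoint gauss_weight (z q : R) (c : nat) : R :=
  match c with O => 1 | S c => gauss_weight z q c * (z * q ^ c) end.

Lemma gauss_weight_scale (z a q : R) (c : nat) : gauss_weight (z * a) q c = gauss_weight z q c * a ^ c.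
Proof. induction c as [|c IH]; simpl; [ring|]. rewrite IH. ring. Qed.

Lemma gauss_weight_opp (z q : R) (c : nat) : gauss_weight (- z) q c = (-1) ^ c * gauss_weight z q c.
Proof. replace (- z) with (z * -1) by ring. rewrite gauss_weight_scale. ring. Qed.

Lemma gauss_weight_square (y q : R) (c : nat) : q = y * y -> gauss_weight y q c = y ^ (c * c).
Proof.
  intros Hq. induction c as [|c IH]; simpl; [reflexivity|]. rewrite IH, Hq, Rpow_mult_distr.
  replace (c + c * S c)%nat with (c * c + c + c)%nat by nia. rewrite !pow_add. ring.
Qed.

Lemma gauss_weight_neq (z q : R) (c : nat) : z <> 0 -> q <> 0 -> gauss_weight z q c <> 0.
Proof.
  intros Hz Hq. induction c as [|c IH]; simpl; [lra|].
  repeat apply Rmult_integral_contrapositive_currified; auto. apply pow_nonzero. exact Hq.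
Qed.

Definition qbin (q : R) (N c : nat) : R :=
  if (c <=? N)%nat then qpoch q q N / (qpoch q q c * qpoch q q (N - c)) else 0.

Section QBinomial.
Variable q : R.
Hypothesis hq0 : 0 < q.
Hypothesis hq1 : q < 1.

Lemma qfac_pos (n : nat) : 0 < qpoch q q n.
Proof. apply qpoch_pos; lra. Qed.

Lemma qfac_neq (n : nat) : qpoch q q n <> 0.
Proof. apply Rgt_not_eq, qfac_pos. Qed.

Lemma qfac_S (n : nat) : qpoch q q (S n) = qpoch q q n * (1 - q ^ S n).
Proof. reflexivity. Qed.

Lemma one_minus_qpow_neq (n : nat) : 1 - q ^ S n <> 0.
Proof. pose proof (pow_lt_1_compat q (S n) ltac:(lra) ltac:(lia)). lra. Qed.

Lemma qbin_0 (N : nat) : qbin q N 0 = 1.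
Proof. unfold qbin. simpl. rewrite Nat.sub_0_r. field. apply qfac_neq. Qed.

Lemma qbin_big (N c : nat) : (N < c)%nat -> qbin q N c = 0.
Proof. intros H. unfold qbin. destruct (Nat.leb_spec c N); [lia | reflexivity]. Qed.

(** q-Pascal rule: [[N+1; c+1] = [N; c+1] + q^(N-c) [N; c]], from
    [1 - q^(c+d+2) = (1 - q^(d+1)) + q^(d+1) (1 - q^(c+1))]. *)
Lemma qbin_pascal (N c : nat) : qbin q (S N) (S c) = qbin q N (S c) + q ^ (N - c) * qbin q N c.
Proof.
  destruct (lt_eq_lt_dec c N) as [[Hlt| ->]|Hgt].
  - destruct (Nat.le_exists_sub (S c) N Hlt) as [d [-> _]]. unfold qbin.
    destruct (Nat.leb_spec (S c) (S (d + S c))), (Nat.leb_spec (S c) (d + S c)),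
      (Nat.leb_spec c (d + S c)); try lia.
    replace (S (d + S c) - S c)%nat with (S d) by lia.
    replace (d + S c - S c)%nat with d by lia.
    replace (d + S c - c)%nat with (S d) by lia.
    rewrite !qfac_S. replace (S (d + S c)) with (S d + S c)%nat by lia. rewrite pow_add.
    pose proof (qfac_neq c). pose proof (qfac_neq d). pose proof (qfac_neq (d + S c)).
    pose proof (one_minus_qpow_neq c). pose proof (one_minus_qpow_neq d).
    field. tauto.
  - unfold qbin.
    destruct (Nat.leb_spec (S N) (S N)), (Nat.leb_spec (S N) N), (Nat.leb_spec N N); try lia.
    rewrite !Nat.sub_diag. simpl pow. field. repeat split; apply qfac_neq.
  - rewrite !qbin_big by lia. ring.
Qed.

Lemma q_binomial_theorem (z : R) (N : nat) :
  qpoch (- z) q N = sum_f_R0 (fun c => qbin q N c * gauss_weight z q c) N.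
Proof.
  induction N as [|N IH]; [simpl; rewrite qbin_0; ring|].
  assert (shifted : sum_f_R0 (fun c => qbin q N c * gauss_weight z q c) N
    = 1 * gauss_weight z q 0 + sum_f_R0 (fun i => qbin q N (S i) * gauss_weight z q (S i)) N).
  { transitivity (sum_f_R0 (fun c => qbin q N c * gauss_weight z q c) (S N)).
    - rewrite tech5, (qbin_big N (S N)) by lia. ring.
    - rewrite (decomp_sum _ (S N)) by lia. simpl pred. rewrite qbin_0. reflexivity. }
  rewrite qpoch_S, IH, (decomp_sum _ (S N)) by lia. simpl pred. rewrite qbin_0.
  rewrite (sum_eq (fun i => qbin q (S N) (S i) * gauss_weight z q (S i))
             (fun i => qbin q N (S i) * gauss_weight z q (S i)
                       + qbin q N i * gauss_weight z q i * (z * q ^ N))).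
  2:{ intros i Hi. rewrite qbin_pascal. simpl gauss_weight.
      replace (q ^ N) with (q ^ (N - i) * q ^ i) by (rewrite <- pow_add; f_equal; lia). ring. }
  rewrite plus_sum, <- scal_sum, <- Rplus_assoc, <- shifted. ring.
Qed.

Lemma qbin_form (N c : nat) : (c <= N)%nat -> qbin q N c = qpoch (q * q ^ (N - c)) q c / qpoch q q c.
Proof.
  intros H. unfold qbin. destruct (Nat.leb_spec c N); [|lia].
  replace N with ((N - c) + c)%nat at 1 by lia. rewrite qpoch_split.
  field. split; apply qfac_neq.
Qed.

Lemma qbin_bounds (N c : nat) : 0 <= qbin q N c <= / qpoch q q c.
Proof.
  pose proof (Rinv_0_lt_compat _ (qfac_pos c)).
  destruct (le_lt_dec c N) as [Hc|Hc]; [|rewrite qbin_big by exact Hc; lra].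
  rewrite qbin_form by exact Hc. unfold Rdiv.
  destruct (pow_unit_interval q (N - c) ltac:(lra)).
  assert (q * q ^ (N - c) <= 1 * 1) by (apply Rmult_le_compat; lra).
  destruct (qpoch_unit_interval (q * q ^ (N - c)) q c ltac:(lra)) as [Hp0 Hp1];
    [split; [apply Rmult_le_pos|]; lra|].
  split; [apply Rmult_le_pos; lra|].
  rewrite <- (Rmult_1_l (/ qpoch q q c)) at 2. apply Rmult_le_compat_r; lra.
Qed.

Lemma qpoch_shift_lim (b : R) (c : nat) : Un_cv (fun M => qpoch (b * q ^ M) q c) 1.
Proof.
  induction c as [|c IH]; simpl; [apply Un_cv_const|].
  assert (X : Un_cv (fun M => b * q ^ M * q ^ c) 0).
  { apply (Un_cv_ext (fun M => (b * q ^ c) * q ^ M)); [intro; ring|].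
    rewrite <- (Rmult_0_r (b * q ^ c)). apply Un_cv_scal, Un_cv_pow0. lra. }
  pose proof (CV_mult _ _ _ _ IH (CV_minus _ _ _ _ (Un_cv_const 1) X)) as H.
  rewrite Rminus_0_r, Rmult_1_l in H. exact H.
Qed.

Lemma qbin_lim (c : nat) : Un_cv (fun N => qbin q N c) (/ qpoch q q c).
Proof.
  apply (Un_cv_eventually _ (fun N => qpoch (q * q ^ (N - c)) q c * / qpoch q q c) _ c).
  { intros n Hn. rewrite qbin_form by exact Hn. reflexivity. }
  rewrite <- (Rmult_1_l (/ qpoch q q c)) at 1.
  apply (CV_mult _ (fun _ => / qpoch q q c)); [|apply Un_cv_const].
  apply (CV_shift _ c). apply (Un_cv_ext (fun M => qpoch (q * q ^ M) q c)); [|apply qpoch_shift_lim].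
  intro n. do 3 f_equal. lia.
Qed.

(** Euler's identity [(-z;q)_oo = sum_c z^c q^(c(c-1)/2) / (q;q)_c]: both sides converge to a
    common limit. It follows from the q-binomial theorem by Tannery's theorem. *)
Lemma euler (z : R) : z <> 0 ->
  exists E, Un_cv (sum_f_R0 (fun c => gauss_weight z q c / qpoch q q c)) E /\
            Un_cv (qpoch (- z) q) E.
Proof.
  intros Hz.
  set (M := fun c => Rabs (gauss_weight z q c) / (1 - q) ^ c).
  assert (Mneq : forall c, M c <> 0).
  { intro c. apply Rmult_integral_contrapositive_currified.
    - apply Rabs_no_R0, gauss_weight_neq; lra.
    - apply Rinv_neq_0_compat, pow_nonzero. lra. }
  destruct (Alembert_C2 M Mneq) as [SM CM].
  { apply (Un_cv_ext (fun n => Rabs z / (1 - q) * q ^ n)).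
    - intro n. unfold M. simpl gauss_weight. simpl pow.
      rewrite !Rabs_mult, (Rabs_pos_eq (q ^ n)) by (apply pow_le; lra).
      assert (Rabs (gauss_weight z q n) <> 0) by (apply Rabs_no_R0, gauss_weight_neq; lra).
      assert ((1 - q) ^ n <> 0) by (apply pow_nonzero; lra).
      replace (Rabs (gauss_weight z q n) * (Rabs z * q ^ n) / ((1 - q) * (1 - q) ^ n)
               / (Rabs (gauss_weight z q n) / (1 - q) ^ n))
        with (Rabs z / (1 - q) * q ^ n) by (field; lra).
      rewrite (Rabs_pos_eq (Rabs z / (1 - q) * q ^ n)); [reflexivity|].
      apply Rmult_le_pos; [apply Rmult_le_pos, Rlt_le, Rinv_0_lt_compat | apply pow_le];
        try apply Rabs_pos; lra.
    - rewrite <- (Rmult_0_r (Rabs z / (1 - q))). apply Un_cv_scal, Un_cv_pow0. lra. }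
  destruct (tannery (fun N c => qbin q N c * gauss_weight z q c)
              (fun c => gauss_weight z q c / qpoch q q c) M SM) as [E [C1 C2]].
  - intros N c. unfold M. rewrite Rabs_mult, (Rabs_pos_eq (qbin q N c)) by apply qbin_bounds.
    unfold Rdiv. rewrite Rmult_comm. apply Rmult_le_compat_l; [apply Rabs_pos|].
    eapply Rle_trans; [apply qbin_bounds|].
    apply Rinv_le_contravar; [apply pow_lt; lra | apply qfac_lower; lra].
  - exact CM.
  - intro c. unfold Rdiv. rewrite Rmult_comm.
    apply (CV_mult _ (fun _ => gauss_weight z q c)); [apply qbin_lim | apply Un_cv_const].
  - exists E. split; [exact C1|].
    apply (Un_cv_ext (fun N => sum_f_R0 (fun c => qbin q N c * gauss_weight z q c) N)); [|exact C2].
    intro N. rewrite q_binomial_theorem. reflexivity.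
Qed.

Lemma euler_shifted (a P : R) (i : nat) : a <> 0 -> a < 1 -> Un_cv (qpoch a q) P ->
  Un_cv (sum_f_R0 (fun c => gauss_weight (- (a * q ^ i)) q c / qpoch q q c)) (P / qpoch a q i).
Proof.
  intros Ha0 Ha1 CP.
  assert (Hi : qpoch a q i <> 0) by (apply Rgt_not_eq, qpoch_pos; lra).
  destruct (euler (- (a * q ^ i))) as [E [CE CEq]].
  { apply Ropp_neq_0_compat, Rmult_integral_contrapositive_currified; [exact Ha0|].
    apply pow_nonzero. lra. }
  rewrite Ropp_involutive in CEq.
  replace (P / qpoch a q i) with E; [exact CE|].
  apply (UL_sequence (qpoch (a * q ^ i) q)); [exact CEq|].
  apply (Un_cv_ext (fun N => qpoch a q (N + i) * / qpoch a q i)).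
  - intro N. rewrite Nat.add_comm, qpoch_split. field. exact Hi.
  - apply (CV_mult _ (fun _ => / qpoch a q i)); [apply CV_shift', CP | apply Un_cv_const].
Qed.

End QBinomial.

Definition s_exponent (n s : nat) : nat := ((2 * n - s) * (2 * n - s) + s * s + (2 * n - s) * s)%nat.

Section FiniteIdentity.
Variables y q : R.
Hypothesis hy : y <> 0.
Hypothesis hqy : q = y * y.
Hypothesis hq0 : 0 < q.
Hypothesis hq1 : q < 1.

(** [(-y^(1-2n);q)_n y^(2n^2) = y^(n^2) (-y;q)_n]: reversing the order of the factors. *)
Lemma qpoch_reflect (n : nat) :
  qpoch (- (y / y ^ (2 * n))) q n * y ^ (2 * n * n) = y ^ (n * n) * qpoch (- y) q n.
Proof.
  induction n as [|n IH]; [simpl; ring|].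
  assert (Hp : forall k, y ^ k <> 0) by (intro; apply pow_nonzero, hy).
  rewrite qpoch_front.
  replace (- (y / y ^ (2 * S n)) * q) with (- (y / y ^ (2 * n))).
  2:{ rewrite hqy. replace (2 * S n)%nat with (2 * n + 2)%nat by lia. rewrite pow_add.
      field. repeat split; first [apply Hp | exact hy]. }
  replace (2 * S n * S n)%nat with (2 * n * n + (4 * n + 2))%nat by nia.
  replace (S n * S n)%nat with (n * n + (2 * n + 1))%nat by nia.
  rewrite (pow_add y (2 * n * n)), (pow_add y (n * n)), qpoch_S.
  transitivity ((1 - - (y / y ^ (2 * S n))) * y ^ (4 * n + 2)
                * (qpoch (- (y / y ^ (2 * n))) q n * y ^ (2 * n * n))); [ring|].
  rewrite IH, hqy.
  replace (2 * S n)%nat with (2 * n + 2)%nat by lia.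
  replace (4 * n + 2)%nat with ((2 * n + 1) + (2 * n + 1))%nat by lia.
  rewrite !pow_add. replace (y * y) with (y ^ 2) by ring. rewrite <- pow_mult.
  field. repeat split; first [apply Hp | exact hy].
Qed.

(** The finite identity, with q-binomial coefficients:
    [sum_(s <= 2n) [2n; s] y^(s_exponent n s) = y^(3n^2) (-y;q)_n^2].
    It is the q-binomial theorem for [(-y^(1-2n);q)_(2n)]. *)
Lemma finite_identity_qbin (n : nat) :
  sum_f_R0 (fun s => qbin q (2 * n) s * y ^ (s_exponent n s)) (2 * n) = y ^ (3 * (n * n)) * qpoch (- y) q n ^ 2.
Proof.
  set (z := y / y ^ (2 * n)).
  assert (Hp : forall k, y ^ k <> 0) by (intro; apply pow_nonzero, hy).
  transitivity (y ^ (4 * (n * n)) * sum_f_R0 (fun s => qbin q (2 * n) s * gauss_weight z q s) (2 * n)).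
  { rewrite scal_sum. apply sum_eq. intros s Hs.
    assert (W : gauss_weight z q s * (y ^ (2 * n)) ^ s = y ^ (s * s)).
    { rewrite <- gauss_weight_scale. unfold z.
      replace (y / y ^ (2 * n) * y ^ (2 * n)) with y by (field; apply Hp).
      apply gauss_weight_square, hqy. }
    assert (Ex : (s_exponent n s + 2 * n * s = 4 * (n * n) + s * s)%nat).
    { unfold s_exponent. replace (2 * n)%nat with ((2 * n - s) + s)%nat at 2 3 by lia. nia. }
    rewrite <- pow_mult in W.
    apply (Rmult_eq_reg_r (y ^ (2 * n * s))); [|apply Hp].
    transitivity (qbin q (2 * n) s * (y ^ s_exponent n s * y ^ (2 * n * s))); [ring|].
    rewrite <- pow_add, Ex, pow_add, <- W. ring. }
  rewrite <- q_binomial_theorem by assumption.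
  replace (2 * n)%nat with (n + n)%nat at 1 by lia. rewrite qpoch_split.
  replace (- z * q ^ n) with (- y).
  2:{ unfold z. rewrite hqy. replace (y * y) with (y ^ 2) by ring. rewrite <- pow_mult, Nat.mul_comm.
      field. apply Hp. }
  replace (4 * (n * n))%nat with (2 * n * n + 2 * n * n)%nat by lia.
  replace (3 * (n * n))%nat with (n * n + 2 * n * n)%nat by lia.
  rewrite !pow_add.
  transitivity ((qpoch (- z) q n * y ^ (2 * n * n)) * y ^ (2 * n * n) * qpoch (- y) q n); [ring|].
  unfold z. rewrite qpoch_reflect. ring.
Qed.

Lemma finite_identity (n : nat) :
  sum_f_R0 (fun s => y ^ (s_exponent n s) / (qpoch q q (2 * n - s) * qpoch q q s)) (2 * n) =
  y ^ (3 * (n * n)) * qpoch (- y) q n ^ 2 / qpoch q q (2 * n).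
Proof.
  rewrite <- finite_identity_qbin. unfold Rdiv. rewrite Rmult_comm, scal_sum.
  apply sum_eq. intros s Hs. unfold qbin. destruct (Nat.leb_spec s (2 * n)); [|lia].
  field. repeat split; apply qfac_neq; assumption.
Qed.

End FiniteIdentity.

(** Series whose terms are bounded by [2^i x^(3i^2) / (q;q)_(2i)] converge, since
    [1/(q;q)_(2i) <= (1-q)^(-2i)] and the majorant is then Gaussian. *)
Lemma theta_series_cv (q x : R) (u : nat -> R) : 0 < q < 1 -> 0 < x < 1 ->
  (forall i, Rabs (u i) <= 2 ^ i * (x ^ (3 * (i * i)) / qpoch q q (2 * i))) ->
  exists S, Un_cv (sum_f_R0 u) S.
Proof.
  intros Hq Hx Hu.
  assert (H1q : 0 < (1 - q) * (1 - q)) by (apply Rmult_lt_0_compat; lra).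
  apply (gaussian_series_cv (2 / ((1 - q) * (1 - q))) (x ^ 3)).
  - apply Rdiv_lt_0_compat; lra.
  - split; [apply pow_lt; lra | apply pow_lt_1_compat; lra || lia].
  - intro i. eapply Rle_trans; [apply Hu|].
    unfold Rdiv. rewrite <- pow_mult, Rpow_mult_distr, pow_inv.
    replace (2 ^ i * (x ^ (3 * (i * i)) * / qpoch q q (2 * i))) with
      (2 ^ i * x ^ (3 * (i * i)) * / qpoch q q (2 * i)) by ring.
    replace (2 ^ i * / ((1 - q) * (1 - q)) ^ i * x ^ (3 * (i * i))) with
      (2 ^ i * x ^ (3 * (i * i)) * / ((1 - q) * (1 - q)) ^ i) by ring.
    apply Rmult_le_compat_l; [apply Rmult_le_pos; apply pow_le; lra|].
    apply Rinv_le_contravar; [apply pow_lt; exact H1q|].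
    replace ((1 - q) * (1 - q)) with ((1 - q) ^ 2) by ring. rewrite <- pow_mult.
    apply qfac_lower. lra.
Qed.

(** For fixed [i, j] only [k <= i + j] contribute; [k_sum q i j] is the sum over [k]. *)
Definition k_sum (q : R) (i j : nat) : R := sum_f_R0 (lhs_term q i j) (i + j).

(** The summand re-indexed by [s = i + k - j], i.e. [k = j + s - i] (zero when [k < 0]). *)
Definition lhs_term_s (q : R) (i j s : nat) : R :=
  if (i <=? j + s)%nat then lhs_term q i j (j + s - i) else 0.

Section TripleSumSlices.
Variable q : R.
Hypothesis hq0 : 0 < q.
Hypothesis hq1 : q < 1.

Lemma inv_qfac_nat (n : nat) : inv_qfac q (Z.of_nat n) = / qpoch q q n.
Proof. unfold inv_qfac. destruct (Z.ltb_spec (Z.of_nat n) 0); [lia|]. rewrite Nat2Z.id. reflexivity. Qed.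

Lemma inv_qfac_nonneg (z : Z) : 0 <= inv_qfac q z.
Proof. unfold inv_qfac. destruct (z <? 0)%Z; [lra|]. left. apply Rinv_0_lt_compat, qfac_pos; assumption. Qed.

Lemma lhs_term_nonneg (i j k : nat) : 0 <= lhs_term q i j k.
Proof. unfold lhs_term. repeat apply Rmult_le_pos; try apply inv_qfac_nonneg. apply pow_le. lra. Qed.

Lemma lhs_term_zero (i j k : nat) : (i + j < k \/ i + k < j \/ j + k < i)%nat -> lhs_term q i j k = 0.
Proof.
  intros Htri. unfold lhs_term, inv_qfac.
  destruct (Z.ltb_spec (Z.of_nat i + Z.of_nat j - Z.of_nat k) 0),
    (Z.ltb_spec (Z.of_nat i + Z.of_nat k - Z.of_nat j) 0),
    (Z.ltb_spec (Z.of_nat j + Z.of_nat k - Z.of_nat i) 0); try ring; lia.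
Qed.

Lemma k_sum_cv (i j : nat) : Un_cv (sum_f_R0 (lhs_term q i j)) (k_sum q i j).
Proof.
  apply (Un_cv_eventually _ (fun _ => k_sum q i j) _ (i + j)); [|apply Un_cv_const].
  intros n Hn. apply sum_trailing_zeros; [exact Hn|]. intros. apply lhs_term_zero. lia.
Qed.

Lemma k_sum_by_s (i j : nat) : k_sum q i j = sum_f_R0 (lhs_term_s q i j) (2 * i).
Proof.
  unfold k_sum. destruct (le_lt_dec i j) as [Hij|Hij].
  - destruct (Nat.le_exists_sub i j Hij) as [d [-> _]].
    replace (i + (d + i))%nat with (d + 2 * i)%nat by lia.
    rewrite sum_drop_zeros by (intros; apply lhs_term_zero; lia).
    apply sum_eq. intros s Hs. unfold lhs_term_s.
    destruct (Nat.leb_spec i (d + i + s)); [|lia]. f_equal. lia.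
  - destruct (Nat.le_exists_sub j i ltac:(lia)) as [d [-> _]].
    replace (2 * (d + j))%nat with (d + (d + j + j))%nat by lia.
    rewrite (sum_drop_zeros (lhs_term_s q (d + j) j)).
    + apply sum_eq. intros s Hs. unfold lhs_term_s.
      destruct (Nat.leb_spec (d + j) (j + (d + s))); [|lia]. f_equal. lia.
    + intros k Hk. unfold lhs_term_s. destruct (Nat.leb_spec (d + j) (j + k)); [lia | reflexivity].
Qed.

Variable x : R.
Hypothesis hx0 : 0 < x.
Hypothesis hx1 : x < 1.
Hypothesis hqx : q = x * x.

(** Coefficient of the [s]-th slice; the [j]-dependence of the slice is an Euler series. *)
Definition s_coeff (i s : nat) : R := x ^ s_exponent i s / (qpoch q q (2 * i - s) * qpoch q q s).

Definition theta_plus (i : nat) : R := qpoch (- x) q i * x ^ (3 * (i * i)) / qpoch q q (2 * i).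
Definition theta_minus (i : nat) : R :=
  qpoch x q i * x ^ (3 * (i * i)) * (-1) ^ i / qpoch q q (2 * i).

Lemma q_pow_x (e : nat) : q ^ e = x ^ (2 * e).
Proof. rewrite hqx, pow_mult. f_equal. ring. Qed.

Lemma gauss_weight_shifted (i c : nat) : gauss_weight (x * q ^ i) q c = x ^ (c * c + 2 * i * c).
Proof.
  rewrite gauss_weight_scale, (gauss_weight_square x q c hqx), q_pow_x, <- pow_mult, <- pow_add.
  reflexivity.
Qed.

(** Exponent bookkeeping for [s = 2h + p], [j = i - h + m], hence [j + k - i = 2m + p]. *)
Lemma exponent_reindex (i h p m : nat) : (p <= 1)%nat -> (2 * h + p <= 2 * i)%nat ->
  (2 * (i * i + (i - h + m) * (i - h + m) + (i - h + m + (2 * h + p) - i) * (i - h + m + (2 * h + p) - i))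
   = s_exponent i (2 * h + p) + ((2 * m + p) * (2 * m + p) + 2 * i * (2 * m + p)))%nat.
Proof.
  intros Hp Hs. unfold s_exponent.
  destruct (Nat.le_exists_sub h i ltac:(lia)) as [r [-> _]].
  replace (r + h - h + m)%nat with (r + m)%nat by lia.
  replace (r + m + (2 * h + p) - (r + h))%nat with (m + h + p)%nat by lia.
  destruct p as [|[|p]]; [| |lia].
  - replace (2 * (r + h) - (2 * h + 0))%nat with (2 * r)%nat by lia. nia.
  - destruct r as [|r]; [lia|].
    replace (2 * (S r + h) - (2 * h + 1))%nat with (2 * r + 1)%nat by lia. nia.
Qed.

Lemma lhs_term_s_value (i h p m : nat) : (p <= 1)%nat -> (2 * h + p <= 2 * i)%nat ->
  lhs_term_s q i (i - h + m) (2 * h + p) =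
  s_coeff i (2 * h + p) * (x ^ ((2 * m + p) * (2 * m + p) + 2 * i * (2 * m + p)) / qpoch q q (2 * m + p)).
Proof.
  intros Hp Hs. unfold lhs_term_s. destruct (Nat.leb_spec i (i - h + m + (2 * h + p))); [|lia].
  unfold lhs_term, s_coeff.
  set (k := (i - h + m + (2 * h + p) - i)%nat). set (j := (i - h + m)%nat).
  replace (Z.of_nat i + Z.of_nat j - Z.of_nat k)%Z with (Z.of_nat (2 * i - (2 * h + p))) by lia.
  replace (Z.of_nat i + Z.of_nat k - Z.of_nat j)%Z with (Z.of_nat (2 * h + p)) by lia.
  replace (Z.of_nat j + Z.of_nat k - Z.of_nat i)%Z with (Z.of_nat (2 * m + p)) by lia.
  rewrite !inv_qfac_nat, q_pow_x. unfold j, k. rewrite exponent_reindex, pow_add by assumption.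
  pose proof (qfac_neq q hq0 hq1 (2 * i - (2 * h + p))). pose proof (qfac_neq q hq0 hq1 (2 * h + p)).
  pose proof (qfac_neq q hq0 hq1 (2 * m + p)).
  field. auto.
Qed.

Lemma lhs_term_s_zero (i h p j : nat) : (p <= 1)%nat -> (j < i - h)%nat ->
  lhs_term_s q i j (2 * h + p) = 0.
Proof.
  intros Hp Hj. unfold lhs_term_s. destruct (Nat.leb_spec i (j + (2 * h + p))); [|reflexivity].
  apply lhs_term_zero. lia.
Qed.

(** Summing the slice [s = 2h + p] over [j] gives [s_coeff i s] times the even ([p = 0]) or odd
    ([p = 1]) part of [sum_c x^(c^2 + 2ic)/(q)_c], whose plain and alternating versions are the
    Euler series at [z = x q^i] and [z = -x q^i]. *)
Lemma slice_cv_parity (i h p : nat) (E1 E2 : R) : (p <= 1)%nat -> (2 * h + p <= 2 * i)%nat ->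
  Un_cv (sum_f_R0 (fun c => gauss_weight (x * q ^ i) q c / qpoch q q c)) E1 ->
  Un_cv (sum_f_R0 (fun c => gauss_weight (- (x * q ^ i)) q c / qpoch q q c)) E2 ->
  Un_cv (sum_f_R0 (fun j => lhs_term_s q i j (2 * h + p)))
        (s_coeff i (2 * h + p) * ((E1 + (-1) ^ (2 * h + p) * E2) / 2)).
Proof.
  intros Hp Hs C1 C2.
  set (a := fun c => x ^ (c * c + 2 * i * c) / qpoch q q c).
  assert (Ca : Un_cv (sum_f_R0 a) E1).
  { apply (Un_cv_ext (sum_f_R0 (fun c => gauss_weight (x * q ^ i) q c / qpoch q q c))); [|exact C1].
    intro n. apply sum_eq. intros c _. unfold a. rewrite gauss_weight_shifted. reflexivity. }
  assert (Cb : Un_cv (sum_f_R0 (fun c => (-1) ^ c * a c)) E2).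
  { apply (Un_cv_ext (sum_f_R0 (fun c => gauss_weight (- (x * q ^ i)) q c / qpoch q q c))); [|exact C2].
    intro n. apply sum_eq. intros c _. unfold a. rewrite gauss_weight_opp, gauss_weight_shifted.
    unfold Rdiv. ring. }
  apply (series_drop_zeros _ (i - h)); [intros j Hj; apply lhs_term_s_zero; assumption|].
  apply (Un_cv_ext (fun N => s_coeff i (2 * h + p) * sum_f_R0 (fun m => a (2 * m + p)%nat) N)).
  - intro N. rewrite scal_sum. apply sum_eq. intros m _.
    rewrite lhs_term_s_value by assumption. unfold a. ring.
  - rewrite pow_add, pow_m1_even, Rmult_1_l. apply Un_cv_scal, series_parity_part; assumption.
Qed.

Lemma slice_cv (i s : nat) (E1 E2 : R) : (s <= 2 * i)%nat ->
  Un_cv (sum_f_R0 (fun c => gauss_weight (x * q ^ i) q c / qpoch q q c)) E1 ->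
  Un_cv (sum_f_R0 (fun c => gauss_weight (- (x * q ^ i)) q c / qpoch q q c)) E2 ->
  Un_cv (sum_f_R0 (fun j => lhs_term_s q i j s)) (s_coeff i s * ((E1 + (-1) ^ s * E2) / 2)).
Proof.
  intros Hs C1 C2.
  destruct (Nat.Even_or_Odd s) as [[h ->]|[h ->]].
  - rewrite <- (Nat.add_0_r (2 * h)). apply slice_cv_parity; lia || assumption.
  - apply slice_cv_parity; lia || assumption.
Qed.

Lemma s_exponent_parity (i s : nat) : (s <= 2 * i)%nat -> (-1) ^ s_exponent i s = (-1) ^ s.
Proof.
  intros Hs.
  assert (Ex : (s_exponent i s + 2 * (i * s) = 2 * (2 * (i * i)) + s * s)%nat).
  { unfold s_exponent. replace (2 * i)%nat with ((2 * i - s) + s)%nat at 2 3 by lia. nia. }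
  rewrite <- (pow_m1_square s).
  apply (Rmult_eq_reg_r ((-1) ^ (2 * (i * s)))); [|rewrite pow_m1_even; lra].
  rewrite <- pow_add, Ex, pow_add, !pow_m1_even. ring.
Qed.

(** The finite identity at [y = x] and at [y = -x]: the plain and the alternating [s]-sums. *)
Lemma s_sum_plus (i : nat) :
  sum_f_R0 (s_coeff i) (2 * i) = x ^ (3 * (i * i)) * qpoch (- x) q i ^ 2 / qpoch q q (2 * i).
Proof. apply finite_identity; assumption || lra. Qed.

Lemma s_sum_alternating (i : nat) :
  sum_f_R0 (fun s => (-1) ^ s * s_coeff i s) (2 * i)
  = (-1) ^ i * x ^ (3 * (i * i)) * qpoch x q i ^ 2 / qpoch q q (2 * i).
Proof.
  assert (Hneg : forall e, (- x) ^ e = (-1) ^ e * x ^ e)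
    by (intro e; rewrite <- Rpow_mult_distr; f_equal; ring).
  replace (qpoch x q i) with (qpoch (- - x) q i) by (rewrite Ropp_involutive; reflexivity).
  replace ((-1) ^ i * x ^ (3 * (i * i))) with ((- x) ^ (3 * (i * i))).
  2:{ rewrite Hneg. replace (3 * (i * i))%nat with (2 * (i * i) + i * i)%nat by lia.
      rewrite pow_add, pow_m1_even, pow_m1_square. ring. }
  rewrite <- finite_identity by (lra || assumption || (rewrite hqx; ring)).
  apply sum_eq. intros s Hs. unfold s_coeff.
  rewrite Hneg, s_exponent_parity by exact Hs. unfold Rdiv. ring.
Qed.

Lemma i_slice_cv (i : nat) (P1 P2 : R) : Un_cv (qpoch (- x) q) P1 -> Un_cv (qpoch x q) P2 ->
  Un_cv (sum_f_R0 (k_sum q i)) (/ 2 * P1 * theta_plus i + / 2 * P2 * theta_minus i).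
Proof.
  intros CP1 CP2.
  assert (Hm : qpoch (- x) q i <> 0) by (apply Rgt_not_eq, qpoch_pos; lra).
  assert (Hp : qpoch x q i <> 0) by (apply Rgt_not_eq, qpoch_pos; lra).
  pose proof (qfac_neq q hq0 hq1 (2 * i)).
  pose proof (euler_shifted q hq0 hq1 (- x) P1 i ltac:(lra) ltac:(lra) CP1) as C1.
  pose proof (euler_shifted q hq0 hq1 x P2 i ltac:(lra) hx1 CP2) as C2.
  replace (- (- x * q ^ i)) with (x * q ^ i) in C1 by ring.
  apply (Un_cv_ext (sum_f_R0 (fun j => sum_f_R0 (lhs_term_s q i j) (2 * i)))).
  { intro N. apply sum_eq. intros j _. symmetry. apply k_sum_by_s. }
  replace (/ 2 * P1 * theta_plus i + / 2 * P2 * theta_minus i) with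
    (sum_f_R0 (fun s => s_coeff i s * ((P1 / qpoch (- x) q i + (-1) ^ s * (P2 / qpoch x q i)) / 2))
       (2 * i)).
  - apply finite_sum_of_series. intros s Hs. apply slice_cv; assumption.
  - rewrite (sum_eq _ (fun s => s_coeff i s * (P1 / qpoch (- x) q i / 2)
                                + (-1) ^ s * s_coeff i s * (P2 / qpoch x q i / 2)))
      by (intros; field; auto).
    rewrite plus_sum, <- !scal_sum, s_sum_plus, s_sum_alternating.
    unfold theta_plus, theta_minus. field. auto.
Qed.

Lemma theta_weight_nonneg (i : nat) : 0 <= x ^ (3 * (i * i)) / qpoch q q (2 * i).
Proof.
  apply Rmult_le_pos; [apply pow_le; lra|]. left. apply Rinv_0_lt_compat, qfac_pos; assumption.
Qed.

Lemma theta_plus_cv : exists S, Un_cv (sum_f_R0 theta_plus) S.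
Proof.
  apply (theta_series_cv q x); [lra | lra|]. intro i. unfold theta_plus, Rdiv.
  rewrite Rmult_assoc, Rabs_mult, (Rabs_pos_eq (qpoch _ _ _)) by (left; apply qpoch_pos; lra).
  rewrite Rabs_pos_eq by apply theta_weight_nonneg.
  apply Rmult_le_compat_r; [apply theta_weight_nonneg | apply qpoch_le_pow2; lra].
Qed.

Lemma theta_minus_cv : exists S, Un_cv (sum_f_R0 theta_minus) S.
Proof.
  apply (theta_series_cv q x); [lra | lra|]. intro i. unfold theta_minus, Rdiv.
  replace (qpoch x q i * x ^ (3 * (i * i)) * (-1) ^ i * / qpoch q q (2 * i))
    with ((-1) ^ i * qpoch x q i * (x ^ (3 * (i * i)) / qpoch q q (2 * i))) by (unfold Rdiv; ring).
  rewrite !Rabs_mult, pow_1_abs, Rmult_1_l, (Rabs_pos_eq (qpoch _ _ _)) by (left; apply qpoch_pos; lra).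
  rewrite Rabs_pos_eq by apply theta_weight_nonneg.
  apply Rmult_le_compat_r; [apply theta_weight_nonneg|].
  apply Rle_trans with 1; [apply qpoch_unit_interval; lra | apply pow_R1_Rle; lra].
Qed.

End TripleSumSlices.

Theorem mainTheorem19 (q : R) (hq0 : 0 < q) (hq1 : q < 1) :
  exists P1 P2 S1 S2 : R,
    Un_cv (fun n => qpoch (- sqrt q) q n) P1 /\
    Un_cv (fun n => qpoch (sqrt q) q n) P2 /\
    Un_cv (fun N => sum_f_R0 (fun i =>
              qpoch (- sqrt q) q i * sqrt q ^ (3 * (i * i)) / qpoch q q (2 * i)) N) S1 /\
    Un_cv (fun N => sum_f_R0 (fun i =>
              qpoch (sqrt q) q i * sqrt q ^ (3 * (i * i)) * (-1) ^ i / qpoch q q (2 * i)) N) S2 /\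
    Un_cv (lhs_partial q) (/ 2 * P1 * S1 + / 2 * P2 * S2).
Proof.
  set (x := sqrt q).
  assert (hx0 : 0 < x) by (apply sqrt_lt_R0; lra).
  assert (hx1 : x < 1) by (unfold x; rewrite <- sqrt_1; apply sqrt_lt_1; lra).
  assert (hqx : q = x * x) by (unfold x; rewrite sqrt_sqrt; lra).
  destruct (euler q hq0 hq1 x ltac:(lra)) as [P1 [_ CP1]].
  destruct (euler q hq0 hq1 (- x) ltac:(lra)) as [P2 [_ CP2]].
  rewrite Ropp_involutive in CP2.
  destruct (theta_plus_cv q hq0 hq1 x hx0 hx1) as [S1 CS1].
  destruct (theta_minus_cv q hq0 hq1 x hx0 hx1) as [S2 CS2].
  exists P1, P2, S1, S2. repeat split; [exact CP1 | exact CP2 | exact CS1 | exact CS2 |].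
  apply (cube_sum_iterated (lhs_term q) (k_sum q)
           (fun i => / 2 * P1 * theta_plus q x i + / 2 * P2 * theta_minus q x i)).
  - apply lhs_term_nonneg; assumption.
  - apply k_sum_cv; assumption.
  - intro i. apply i_slice_cv; assumption.
  - apply series_lin_comb; assumption.
Qed.
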